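(* Let $\mathcal{X}\subseteq\mathbb{R}^n$ and $f_{cl}:\mathcal{X}\to\mathbb{R}^n$ be locally Lipschitz continuous with constant $L_f$ (i.e. $\|f_{cl}(x)-f_{cl}(z)\|\le L_f\|x-z\|$) for all initial conditions $x_0\in\mathcal{X}$. Consider the nominal system $\dot x=f_{cl}(x)$ with solution signals $\phi(x_0)$ and, for $d\in\mathbb{R}^n$, the perturbed system $\dot x=f_{cl}(x)+d$ with solution signals $\phi^d(x_0)$. Let $\psi$ be one of $\mathbf{G}_{[a,b']}\omega$, $\mathbf{F}_{[a,b']}\omega$, or $\omega_1\,\mathbf{U}_{[a,b']}\,\omega_2$, where $\omega,\omega_1,\omega_2$ are built by the grammar $\omega=\mathrm{true}\mid\mu\mid\neg\mu\mid\omega_1\wedge\omega_2$ from predicates $\mu(x)=\mathrm{true}\iff h_\mu(x)\ge0$. Let $\rho$ be a robustness measure for $\psi$, i.e. $\rho(s,0)\ge0\iff(s,0)\models\psi$ for all signals $s$, and suppose there exist $L_\rho\ge0$ and $b>0$ with $$|\rho(s,0)-\rho(z,0)|\le L_\rho\|s-z\|_{[0,b]}\quad\text{for all signals } s,z,$$ where $\|s\|_{[0,b]}=\max_{t\in[0,b]}\|s(t)\|$. Assume $[0,b]$ is contained in the intervals of existence of both the nominal and perturbed solutions from every $x_0\in\mathcal{X}$. Let $\Delta_d=\min_{x\in\mathcal{X}}\rho(\phi(x),0)$. If $\Delta_d\ge0$, then for every $d$ with $$\|d\|\le\frac{\Delta_d}{L_\rho\, b\, e^{L_f b}}=:\delta^1_d$$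 and every $x_0\in\mathcal{X}$, we have $(\phi^d(x_0),0)\models\psi$.
   Context: $\|\cdot\|$ is the Euclidean 2-norm. A signal is a map $s:[0,T]\to\mathbb{R}^n$. Signal Temporal Logic satisfaction at time $0$ is standard: $(s,0)\models\mathbf{G}_{[a,b']}\omega$ iff $\omega(s(t))$ holds for all $t\in[a,b']$; $(s,0)\models\mathbf{F}_{[a,b']}\omega$ iff $\omega(s(t))$ holds for some $t\in[a,b']$; $(s,0)\models\omega_1\mathbf{U}_{[a,b']}\omega_2$ iff there is $t'\in[a,b']$ with $\omega_2(s(t'))$ true and $\omega_1(s(t))$ true for all $t$ from the start of the interval up to $t'$ ($\omega_1$ holds until $\omega_2$ holds, by time $b'$). *)

From HB Require Import structures.
From mathcomp Require Import all_boot all_order all_algebra.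
From mathcomp Require Import all_classical all_reals all_analysis.
Set Implicit Arguments. Unset Strict Implicit. Unset Printing Implicit Defensive.
Import Order.TTheory GRing.Theory Num.Theory.
Import numFieldNormedType.Exports.
Local Open Scope classical_set_scope.
Local Open Scope ring_scope.

Section Defs.
Variables (R : realType) (n : nat).
Notation V := 'rV[R]_n.

Definition enorm (x : V) : R := Num.sqrt (\sum_(i < n) (x ord0 i) ^+ 2).

(* signals: maps time -> R^n (only values on the relevant interval matter) *)
Definition signal := R -> V.

Inductive sform :=
| STrue
| SPred (h : V -> R)
| SNegPred (h : V -> R)
| SAnd (w1 w2 : sform).

Fixpoint sholds (w : sform) (x : V) : Prop :=
  match w with
  | STrue => True
  | SPred h => 0 <= h x
  | SNegPred h => ~ (0 <= h x)
  | SAnd w1 w2 => sholds w1 x /\ sholds w2 x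
  end.

Inductive tform :=
| TG (a b' : R) (w : sform)
| TF (a b' : R) (w : sform)
| TU (a b' : R) (w1 w2 : sform).

Definition sat0 (psi : tform) (s : signal) : Prop :=
  match psi with
  | TG a b' w => forall t, a <= t <= b' -> sholds w (s t)
  | TF a b' w => exists t, a <= t <= b' /\ sholds w (s t)
  | TU a b' w1 w2 => exists t', a <= t' <= b' /\ sholds w2 (s t') /\
                       forall t, a <= t <= t' -> sholds w1 (s t)
  end.

(* y is a solution of xdot = g(x) on [0,b] starting at x0, with state in X
   (g is only defined on X); derivatives are taken within [0,b]
   (one-sided at the endpoints). *)
Definition is_solution (X : set V) (g : V -> V) (b : R) (x0 : V) (y : signal) : Prop :=
  y 0 = x0 /\
  (forall t, 0 <= t <= b -> X (y t)) /\
  (forall t, 0 <= t <= b ->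
     (fun h : R => h^-1 *: (y (t + h) - y t))
       @ within [set h : R | h != 0 /\ 0 <= t + h <= b] (nbhs (0 : R))
       --> g (y t)).

End Defs.

From HB Require Import structures.
From mathcomp Require Import all_boot all_order all_algebra.
From mathcomp Require Import all_classical all_reals all_analysis.
From mathcomp Require Import ring lra.
Set Implicit Arguments. Unset Strict Implicit. Unset Printing Implicit Defensive.
Import Order.TTheory GRing.Theory Num.Theory.
Import numFieldNormedType.Exports.
Local Open Scope classical_set_scope.
Local Open Scope ring_scope.

(* The deviation e(t) = |y(t) - phi x0 (t)| of the perturbed solution from the
   nominal one grows at rate at most Lf e + |d|, so by Grönwall's inequality
   e(t) <= |d| t exp(Lf t) <= |d| b exp(Lf b) on [0, b].  Since rho is
   Lrho-Lipschitz for the sup norm on [0, b], rho(y) >= rho(phi x0) - Delta >= 0.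
   Grönwall's inequality is obtained without differentiating e: by real
   induction on [0, b], e stays below the supersolution (|d| + eps) t exp(Lf t)
   of w' = Lf w + |d| + eps, and then eps -> 0. *)

Section EuclideanNorm.
Variables (R : realType) (n : nat).
Implicit Types a b : 'rV[R]_n.

Lemma enorm_ge0 a : 0 <= enorm a.
Proof. exact: sqrtr_ge0. Qed.

Lemma enorm_sqr a : enorm a ^+ 2 = \sum_(i < n) a ord0 i ^+ 2.
Proof. by rewrite sqr_sqrtr // sumr_ge0 // => i _; exact: sqr_ge0. Qed.

Lemma enorm0 : enorm (0 : 'rV[R]_n) = 0.
Proof. by rewrite /enorm big1 ?sqrtr0 // => i _; rewrite mxE expr0n. Qed.

Lemma enorm_eq0 a : enorm a = 0 -> forall i, a ord0 i = 0.
Proof.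
move=> a0 i; have : \sum_(j < n) a ord0 j ^+ 2 = 0 by rewrite -enorm_sqr a0 expr0n.
move/psumr_eq0P => /(_ (fun j _ => sqr_ge0 _) i isT) /eqP.
by rewrite sqrf_eq0 => /eqP.
Qed.

Lemma enorm_cauchy_schwarz a b :
  \sum_(i < n) a ord0 i * b ord0 i <= enorm a * enorm b.
Proof.
have [a0|a_neq0] := eqVneq (enorm a) 0.
  by rewrite a0 mul0r big1 // => i _; rewrite (enorm_eq0 a0) mul0r.
have [b0|b_neq0] := eqVneq (enorm b) 0.
  by rewrite b0 mulr0 big1 // => i _; rewrite (enorm_eq0 b0) mulr0.
set A := enorm a; set B := enorm b.
have AB_gt0 : 0 < 2 * (A * B).
  by rewrite !mulr_gt0 // lt_neqAle eq_sym ?a_neq0 ?b_neq0 enorm_ge0.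
(* expand 0 <= \sum_i (B a_i - A b_i)^2 *)
rewrite -(ler_pM2l AB_gt0) mulr_sumr -subr_ge0.
have -> : 2 * (A * B) * (A * B) =
    \sum_(i < n) ((B * a ord0 i) ^+ 2 + (A * b ord0 i) ^+ 2).
  rewrite big_split /=.
  under eq_bigr do rewrite exprMn.
  under [X in _ + X]eq_bigr do rewrite exprMn.
  by rewrite -!mulr_sumr -!enorm_sqr -/A -/B; ring.
rewrite -sumrB sumr_ge0 // => i _.
have -> : (B * a ord0 i) ^+ 2 + (A * b ord0 i) ^+ 2 -
    2 * (A * B) * (a ord0 i * b ord0 i) = (B * a ord0 i - A * b ord0 i) ^+ 2.
  by ring.
exact: sqr_ge0.
Qed.

Lemma enormD a b : enorm (a + b) <= enorm a + enorm b.
Proof.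
rewrite -(@ler_pXn2r _ 2) ?nnegrE ?addr_ge0 ?enorm_ge0 // enorm_sqr.
have -> : \sum_(i < n) (a + b) ord0 i ^+ 2 =
    enorm a ^+ 2 + enorm b ^+ 2 + 2 * \sum_(i < n) a ord0 i * b ord0 i.
  rewrite !enorm_sqr mulr_sumr -!big_split /=.
  by apply: eq_bigr => i _; rewrite mxE; ring.
have := enorm_cauchy_schwarz a b; nra.
Qed.

Lemma enormZ (k : R) a : enorm (k *: a) = `|k| * enorm a.
Proof.
apply/eqP; rewrite -(@eqrXn2 _ 2) // ?mulr_ge0 ?enorm_ge0 //.
rewrite exprMn !enorm_sqr mulr_sumr; apply/eqP/eq_bigr => i _.
by rewrite mxE exprMn real_normK // num_real.
Qed.

Lemma enormN a : enorm (- a) = enorm a.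
Proof. by rewrite -scaleN1r enormZ normrN normr1 mul1r. Qed.

Lemma enorm_dist_dist a b : `|enorm a - enorm b| <= enorm (a - b).
Proof.
have := enormD (a - b) b; have := enormD (b - a) a.
rewrite !subrK -opprB enormN ler_norml.
move=> ba ab; apply/andP; split; lra.
Qed.

Lemma enorm_le_mx_norm a : enorm a <= n%:R * `|a|.
Proof.
rewrite -(@ler_pXn2r _ 2) ?nnegrE ?mulr_ge0 ?enorm_ge0 // enorm_sqr.
apply: (@le_trans _ _ (\sum_(i < n) `|a| ^+ 2)).
  apply: ler_sum => i _; rewrite -real_normK ?num_real // lerXn2r ?nnegrE //.
  rewrite [leRHS]/Num.norm /= mx_normrE.
  exact: (le_bigmax _ (fun ij : 'I_1 * 'I_n => `|a ij.1 ij.2|) (ord0, i)).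
rewrite sumr_const card_ord exprMn -[leLHS]mulr_natl ler_wpM2r ?sqr_ge0 //.
by rewrite -natrX ler_nat; case: (n) => // m; rewrite expnS leq_pmulr.
Qed.

End EuclideanNorm.

Section DifferenceQuotient.
Variables (R : realType) (n : nat).

Definition difference_quotient (q : signal R n) (t h : R) : 'rV[R]_n :=
  h^-1 *: (q (t + h) - q t).

Definition steps_within (b t : R) : set R := [set h | h != 0 /\ 0 <= t + h <= b].

Lemma difference_quotientB (y p : signal R n) t :
  difference_quotient (fun s => y s - p s) t =
  difference_quotient y t - difference_quotient p t.
Proof.
by apply/funext => h; rewrite /difference_quotient !fctE -scalerBr opprD addrACA -opprD.
Qed.

Lemma enorm_increment_le (q : signal R n) (g : 'rV[R]_n) (b t : R) :
  difference_quotient q t @ within (steps_within b t) (nbhs 0) --> g ->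
  forall eta, 0 < eta -> exists2 del, 0 < del &
    forall s, 0 <= s <= b -> `|s - t| < del ->
      enorm (q s - q t) <= `|s - t| * (enorm g + eta).
Proof.
move=> q_g eta eta_gt0.
have eps_gt0 : 0 < eta / n.+1%:R by rewrite divr_gt0.
have := cvgr_dist_lt _ _ q_g _ eps_gt0.
move=> /(_ (within_filter _ _)); rewrite near_withinE.
move=> /(iffLR (nbhs_ballP _ _)) [del del_gt0 near_g].
exists del => // s sb st_del.
have [->|s_neq_t] := eqVneq s t; first by rewrite !subrr enorm0 normr0 mul0r.
set h := s - t; have s_th : s = t + h by rewrite /h addrC subrK.
have h_neq0 : h != 0 by rewrite subr_eq0.
have close : `|g - difference_quotient q t h| < eta / n.+1%:R.
  apply: near_g; last by split=> //; rewrite -s_th.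
  by rewrite -ball_normE /ball_ /= sub0r normrN.
have -> : q s - q t = h *: difference_quotient q t h.
  by rewrite /difference_quotient -s_th scalerA mulfV // scale1r.
rewrite enormZ ler_wpM2l // -(subrK g (difference_quotient q t h)) addrC.
rewrite (le_trans (enormD _ _)) // lerD2l.
rewrite (le_trans (enorm_le_mx_norm _)) // distrC.
rewrite (le_trans (ler_wpM2l _ (ltW close))) //.
by rewrite mulrCA ger_pMr // ler_pdivrMr // mul1r ler_nat.
Qed.
End DifferenceQuotient.

Lemma real_induction (R : realType) (P : R -> Prop) (b : R) :
  (forall t, 0 <= t <= b -> (forall s, 0 <= s < t -> P s) -> P t) ->
  (forall t, 0 <= t < b -> (forall s, 0 <= s <= t -> P s) ->
    exists2 del, 0 < del & forall h, 0 < h < del -> t + h <= b -> P (t + h)) ->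
  forall t, 0 <= t <= b -> P t.
Proof.
move=> left_step right_step.
have [b_lt0|b_ge0] := ltP b 0; first by move=> t /andP[t0 tb]; lra.
pose A := [set t | 0 <= t <= b /\ forall s, 0 <= s <= t -> P s].
have A0 : A 0.
  split; first by rewrite lexx b_ge0.
  move=> s /andP[s0 s_le0]; have -> : s = 0 by apply/eqP; rewrite eq_le s0 s_le0.
  by apply: left_step => [|r /andP[r0 r_lt0]]; [rewrite lexx b_ge0 | lra].
have A_ub : ubound A b by move=> t [/andP[_ tb] _].
have supA : has_sup A by split; [exists 0 | exists b].
set T := sup A.
have T_ge0 : 0 <= T by exact: sup_upper_bound.
have T_le_b : T <= b by apply: ge_sup => //; exists 0.
have P_below : forall s, 0 <= s < T -> P s.
  move=> s /andP[s0 sT].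
  have [a [_ Pa] sa] := @sup_adherent _ A (T - s) ltac:(by rewrite subr_gt0) supA.
  by apply: Pa; rewrite -/T in sa; rewrite s0 /=; lra.
have AT : A T.
  split; first by rewrite T_ge0 T_le_b.
  move=> s /andP[s0]; rewrite le_eqVlt => /orP[/eqP ->|sT].
    by apply: left_step => //; rewrite T_ge0 T_le_b.
  by apply: P_below; rewrite s0 sT.
have T_eq_b : T = b.
  apply/eqP; rewrite eq_le T_le_b leNgt; apply/negP => T_lt_b.
  have T_range : 0 <= T < b by rewrite T_ge0.
  have [del del_gt0 P_right] := right_step T T_range AT.2.
  set m := Num.min del (b - T).
  have m_gt0 : 0 < m by rewrite lt_min del_gt0 subr_gt0.
  have m_le_del : m <= del by rewrite ge_min lexx.
  have m_le_bT : m <= b - T by rewrite ge_min lexx orbT.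
  have : A (T + m / 2).
    split; first by apply/andP; split; lra.
    move=> s /andP[s0 s_le]; have [sT|Ts] := leP s T; first by apply: AT.2; rewrite s0.
    have -> : s = T + (s - T) by rewrite addrC subrK.
    by apply: P_right; [apply/andP; split|]; lra.
  by move=> /(sup_upper_bound supA); rewrite -/T; lra.
by move=> t tb; apply: AT.2; rewrite T_eq_b.
Qed.

Section GronwallBound.
Variables (R : realType) (c K : R).
Hypotheses (c_ge0 : 0 <= c) (K_ge0 : 0 <= K).

Definition gronwall_bound (t : R) : R := c * t * expR (K * t).

Lemma gronwall_bound0 : gronwall_bound 0 = 0.
Proof. by rewrite /gronwall_bound mulr0 mul0r. Qed.

Lemma gronwall_bound_le s t : 0 <= s <= t -> gronwall_bound s <= gronwall_bound t.
Proof.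
move=> /andP[s0 st]; rewrite /gronwall_bound.
by rewrite ler_pM ?mulr_ge0 ?expR_ge0 ?ler_wpM2l ?ler_expR ?ler_wpM2l.
Qed.

(* w is convex and w' = c exp(K t) + K w >= c + K w. *)
Lemma gronwall_boundD t h : 0 <= t -> 0 <= h ->
  gronwall_bound t + h * (c + K * gronwall_bound t) <= gronwall_bound (t + h).
Proof.
move=> t0 h0; rewrite /gronwall_bound [K * (t + h)]mulrDr expRD.
have Kt_ge0 : 0 <= K * t by rewrite mulr_ge0.
have Kh_ge0 : 0 <= K * h by rewrite mulr_ge0.
have := expR_ge1Dx (K * h); have := expR_ge1Dx (K * t).
set A := expR (K * t); set B := expR (K * h) => A_ge B_ge.
have cA : c <= c * A by rewrite ler_peMr //; lra.
have : c * (t + h) * A * (1 + K * h) <= c * (t + h) * (A * B).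
  by rewrite mulrA ler_wpM2l // !mulr_ge0 ?addr_ge0 //; lra.
have : 0 <= c * h * A * (K * h) by rewrite !mulr_ge0 //; lra.
have : h * c <= h * (c * A) by rewrite ler_wpM2l.
nra.
Qed.

End GronwallBound.

Lemma le_of_le_addr_small (R : realFieldType) (x y k m : R) :
  0 < m -> 0 <= k -> (forall r, 0 < r < m -> x <= y + r * k) -> x <= y.
Proof.
move=> m_gt0 k_ge0 le_small; apply/ler_addgt0Pr => eta eta_gt0.
set r := Num.min m (eta / (k + 1)) / 2.
have r_le_eta : r <= eta / (k + 1) / 2 by rewrite ler_pM2r // ge_min lexx orbT.
have r_le_m : r <= m / 2 by rewrite ler_pM2r // ge_min lexx.
have eta_div : eta / (k + 1) * (k + 1) = eta by rewrite divfK // gt_eqF // ltr_wpDl.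
have r_gt0 : 0 < r by rewrite divr_gt0 // lt_min m_gt0 divr_gt0 // ltr_wpDl.
have r_range : 0 < r < m by apply/andP; split; lra.
rewrite (le_trans (le_small r r_range)) // lerD2l.
have q_ge0 : 0 <= eta / (k + 1) by rewrite divr_ge0 ?addr_ge0 // ltW.
move: eta_div q_ge0 r_le_eta; set q := eta / (k + 1); nra.
Qed.

Section Perturbation.
Variables (R : realType) (n : nat) (X : set 'rV[R]_n) (f : 'rV[R]_n -> 'rV[R]_n).
Variables (Lf b : R) (d x0 : 'rV[R]_n) (y p : signal R n).
Hypothesis f_lipschitz :
  forall x z, X x -> X z -> enorm (f x - f z) <= Lf * enorm (x - z).
Hypothesis y_solution : is_solution X (fun x => f x + d) b x0 y.
Hypothesis p_solution : is_solution X f b x0 p.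

Let e t := enorm (y t - p t).

Lemma deviation_increment_le t : 0 <= t <= b ->
  forall eta, 0 < eta -> exists2 del, 0 < del &
    forall s, 0 <= s <= b -> `|s - t| < del ->
      `|e s - e t| <= `|s - t| * (Lf * e t + enorm d + eta).
Proof.
move=> tb eta eta_gt0.
have [_ [yX y']] := y_solution; have [_ [pX p']] := p_solution.
have dq_cvg : difference_quotient (fun s => y s - p s) t
    @ within (steps_within b t) (nbhs 0) --> f (y t) + d - f (p t).
  by rewrite difference_quotientB; exact: cvgB (y' t tb) (p' t tb).
have [del del_gt0 incr_le] := enorm_increment_le dq_cvg eta_gt0.
exists del => // s sb st_del.
rewrite (le_trans (enorm_dist_dist _ _)) // (le_trans (incr_le s sb st_del)) //.
rewrite ler_wpM2l // lerD2r addrAC (le_trans (enormD _ _)) // lerD2r.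
exact: f_lipschitz (yX t tb) (pX t tb).
Qed.

Lemma deviation_le_gronwall_eps eps : 0 <= Lf -> 0 < eps ->
  forall t, 0 <= t <= b -> e t <= gronwall_bound (enorm d + eps) Lf t.
Proof.
move=> Lf_ge0 eps_gt0; set w := gronwall_bound (enorm d + eps) Lf.
have c_ge0 : 0 <= enorm d + eps by rewrite addr_ge0 ?enorm_ge0 ?ltW.
apply: real_induction => [t tb e_le_w|t /andP[t0 tb] e_le_w].
- have [-> | t_neq0] := eqVneq t 0.
    have [y0 _] := y_solution; have [p0 _] := p_solution.
    by rewrite /e y0 p0 subrr enorm0 /w gronwall_bound0.
  have t_gt0 : 0 < t by rewrite lt_neqAle eq_sym t_neq0; case/andP: tb.
  have [del del_gt0 incr_le] := deviation_increment_le tb ltr01.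
  have k_ge0 : 0 <= Lf * e t + enorm d + 1.
    by rewrite !addr_ge0 ?mulr_ge0 ?enorm_ge0.
  apply: (@le_of_le_addr_small _ _ _ _ (Num.min del t) _ k_ge0) => [|r /andP[r_gt0]].
    by rewrite lt_min del_gt0.
  rewrite lt_min => /andP[r_lt_del r_lt_t].
  have s_range : 0 <= t - r <= b by case/andP: tb => *; apply/andP; split; lra.
  have := incr_le (t - r) s_range; rewrite addrAC subrr add0r normrN gtr0_norm //.
  move=> /(_ r_lt_del); rewrite ler_norml => /andP[e_lo _].
  have : e (t - r) <= w (t - r) by apply: e_le_w; apply/andP; split; lra.
  have : w (t - r) <= w t by apply: gronwall_bound_le => //; apply/andP; split; lra.
  lra.
- have e_le_w_t : e t <= w t by apply: e_le_w; rewrite t0 lexx.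
  have tb' : 0 <= t <= b by rewrite t0 ltW.
  have [del del_gt0 incr_le] := deviation_increment_le tb' eps_gt0.
  exists del => // h /andP[h_gt0 h_lt_del] thb.
  have th_range : 0 <= t + h <= b by rewrite thb addr_ge0 // ltW.
  have := incr_le (t + h) th_range; rewrite addrAC subrr add0r gtr0_norm //.
  move=> /(_ h_lt_del); rewrite ler_norml => /andP[_ e_up].
  apply: le_trans (gronwall_boundD c_ge0 Lf_ge0 t0 (ltW h_gt0)).
  have : h * (Lf * e t) <= h * (Lf * w t) by rewrite !ler_wpM2l // ltW.
  rewrite -/w; nra.
Qed.

Lemma deviation_le_gronwall t : 0 <= Lf -> 0 <= t <= b ->
  e t <= gronwall_bound (enorm d) Lf t.
Proof.
move=> Lf_ge0 tb; apply/ler_addgt0Pr => eta eta_gt0.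
have k_gt0 : 0 < t * expR (Lf * t) + 1.
  by case/andP: tb => t0 _; rewrite ltr_wpDl ?mulr_ge0 ?expR_ge0.
have eps_gt0 : 0 < eta / (t * expR (Lf * t) + 1) by rewrite divr_gt0.
rewrite (le_trans (deviation_le_gronwall_eps Lf_ge0 eps_gt0 tb)) //.
rewrite /gronwall_bound -!mulrA mulrDl lerD2l -[leRHS](divfK (lt0r_neq0 k_gt0)).
by rewrite ler_pM2l // lerDl.
Qed.

Lemma deviation_le t : 0 <= t <= b -> e t <= enorm d * b * expR (Lf * b).
Proof.
move=> tb; have [Lf_lt0|Lf_ge0] := ltP Lf 0.
  (* a negative Lipschitz constant forces y t = p t *)
  have [_ [yX _]] := y_solution; have [_ [pX _]] := p_solution.
  have := f_lipschitz (yX t tb) (pX t tb).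
  have := enorm_ge0 (f (y t) - f (p t)); have := enorm_ge0 (y t - p t).
  have : 0 <= enorm d * b * expR (Lf * b).
    by case/andP: tb => t0 tb; rewrite !mulr_ge0 ?enorm_ge0 ?expR_ge0 //; lra.
  rewrite /e; nra.
rewrite (le_trans (deviation_le_gronwall Lf_ge0 tb)) //.
by apply: gronwall_bound_le; rewrite ?enorm_ge0.
Qed.

End Perturbation.

Theorem theorem3 (R : realType) (n : nat) (X : set 'rV[R]_n)
  (f : 'rV[R]_n -> 'rV[R]_n) (Lf : R)
  (phi : 'rV[R]_n -> signal R n)
  (psi : tform R n) (rho : signal R n -> R) (Lrho b : R) (Delta : R) :
  (forall x z, X x -> X z -> enorm (f x - f z) <= Lf * enorm (x - z)) ->
  (forall x0, X x0 -> is_solution X f b x0 (phi x0)) ->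
  (forall s, 0 <= rho s <-> sat0 psi s) ->
  0 <= Lrho -> 0 < b ->
  (forall (s z : signal R n) (M : R),
      (forall t, 0 <= t <= b -> enorm (s t - z t) <= M) ->
      `|rho s - rho z| <= Lrho * M) ->
  (exists2 x, X x & rho (phi x) = Delta) ->
  (forall x, X x -> Delta <= rho (phi x)) ->
  0 <= Delta ->
  forall d : 'rV[R]_n,
    enorm d * (Lrho * b * expR (Lf * b)) <= Delta ->
    forall x0 (y : signal R n), X x0 ->
      is_solution X (fun x => f x + d) b x0 y ->
      sat0 psi y.
Proof.
move=> f_lip phi_sol rho_sat _ _ rho_lip _ Delta_le _ d d_small x0 y x0X y_sol.
apply/rho_sat.
have := rho_lip _ _ _ (deviation_le f_lip y_sol (phi_sol x0 x0X)).
rewrite ler_norml => /andP[rho_close _].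
have := Delta_le x0 x0X.
have : Lrho * (enorm d * b * expR (Lf * b)) = enorm d * (Lrho * b * expR (Lf * b)).
  by ring.
lra.
Qed.
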